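(* For every $n,k,d\in\mathbb{N}$ with $n\ge k\ge d$ there exists $\varepsilon_n(k,d)>0$ such that $$| \tilde{c}(k,d)| - \varepsilon_n(k,d) \leq \inf_{g\in \mathscr{P}_{>k}^n} \|f_d-g\|_1 \leq | \tilde{c}(k,d)|,$$ and $\lim_{n\to\infty}\varepsilon_n(k,d)=0$ for fixed $k,d$.
   Context: $f_d(x)=\sum_{S\subseteq\{1,\dots,n\},|S|=d}\prod_{i\in S}x_i$ is the $d$-th elementary symmetric multilinear polynomial on $\{-1,1\}^n$. Every $g:\{-1,1\}^n\to\mathbb{R}$ has a unique expansion $g=\sum_S\widehat g(S)w_S$ with $w_S(x)=\prod_{i\in S}x_i$, and $\mathscr{P}^n_{>k}=\{g:\ \widehat g(S)=0\text{ whenever }|S|\le k\}$. $\|\cdot\|_1$ is the $L_1$ norm with respect to the uniform probability measure on $\{-1,1\}^n$. Let $T_k(x)=\sum_{\ell=0}^k c(k,\ell)x^\ell$ be the $k$-th Chebyshev polynomial of the first kind, $T_k(\cos\theta)=\cos(k\theta)$. Define $\tilde c(k,\ell)=c(k,\ell)$ if $k-\ell$ is even and $\tilde c(k,\ell)=c(k-1,\ell)$ if $k-\ell$ is odd. *)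

From HB Require Import structures.
From mathcomp Require Import all_boot all_order all_algebra.
From mathcomp Require Import boolp classical_sets reals topology normedtype sequences.
Set Implicit Arguments. Unset Strict Implicit. Unset Printing Implicit Defensive.
Import Order.TTheory GRing.Theory Num.Theory.
Local Open Scope ring_scope.

(* The hypercube {-1,1}^n: a point is b : {ffun 'I_n -> bool}, with
   coordinate x_i = -1 if b i = true, and 1 otherwise. *)
Definition cube (n : nat) := {ffun 'I_n -> bool}.

Definition coord {R : realType} {n : nat} (b : cube n) (i : 'I_n) : R :=
  if b i then -1 else 1.

Definition walsh {R : realType} {n : nat} (S : {set 'I_n}) (b : cube n) : R :=
  \prod_(i in S) coord b i.

Definition fsym {R : realType} (n d : nat) (b : cube n) : R :=
  \sum_(S : {set 'I_n} | #|S| == d) walsh S b.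

Definition L1norm {R : realType} (n : nat) (h : cube n -> R) : R :=
  (2 ^+ n)^-1 * \sum_(b : cube n) `|h b|.

Definition Pgt {R : realType} (n k : nat) : set (cube n -> R) :=
  [set g | exists a : {set 'I_n} -> R,
      (forall S : {set 'I_n}, (#|S| <= k)%N -> a S = 0) /\
      (forall b, g b = \sum_(S : {set 'I_n}) a S * walsh S b)].

(* Chebyshev polynomials of the first kind: T_0 = 1, T_1 = X,
   T_{k+2} = 2 X T_{k+1} - T_k. *)
Fixpoint cheb_pair {R : realType} (k : nat) : {poly R} * {poly R} :=
  match k with
  | 0%N => (1, 'X)
  | k'.+1 => let: (p, q) := cheb_pair k' in (q, 2%:P * 'X * q - p)
  end.

Definition cheb {R : realType} (k : nat) : {poly R} := (cheb_pair k).1.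

Definition ccoef {R : realType} (k l : nat) : R := (cheb k)`_l.

Definition ctilde {R : realType} (k l : nat) : R :=
  if odd (k - l) then ccoef (k.-1) l else ccoef k l.

Definition distP {R : realType} (n k d : nat) : R :=
  inf [set @L1norm R n (fun b => @fsym R n d b - g b) | g in @Pgt R n k]%classic.

(* Upper bound: if a finite signed measure mu on [-1,1] has the moments of
   order <= k of a point mass "x^d" (int t^e dmu = [e == d]), then the
   mixture F of the Riesz products prod_l (1 + t x_l), t ~ mu, has the same
   Walsh coefficients as f_d on all S with |S| <= k, and ||F||_1 <= ||mu||
   since each Riesz product is nonnegative with mean 1.
   Lower bound: if T has degree <= k and |T| <= 1 on [-1,1], then
   b |-> T(mean b) is orthogonal to P_{>k}, so for g in P_{>k}
   ||f_d - g||_1 >= E[(f_d - g) T(mean)] = E[F T(mean)] = int E_t[T(mean)] dmu(t);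
   under the t-biased product measure the mean has standard deviation
   O(n^{-1/2}) around t, so this is int T dmu - O(||mu|| n^{-1/2}).
   Both bounds meet for T = +/- T_K (K = k or k - 1, of the parity of d) and mu
   supported on the extrema cos(j pi / K) of T_K, with weights obtained by
   Lagrange interpolation in x^2 and signs alternating like T_K: then
   int T dmu = ||mu|| = |c~(k,d)|. *)

From Pilot Require Import Defs.
From HB Require Import structures.
From mathcomp Require Import all_boot all_order all_algebra.
From mathcomp Require Import boolp classical_sets reals topology normedtype sequences.
From mathcomp Require Import trigo realfun.
From mathcomp Require Import ring lra zify.

Set Implicit Arguments.
Unset Strict Implicit.
Unset Printing Implicit Defensive.

Import Order.TTheory GRing.Theory Num.Theory numFieldNormedType.Exports.
Local Open Scope classical_set_scope.
Local Open Scope ring_scope.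

Section PolyLipschitz.
Variable R : realFieldType.

Lemma norm_subX_le (y t : R) i : `|y| <= 1 -> `|t| <= 1 ->
  `|y ^+ i - t ^+ i| <= i%:R * `|y - t|.
Proof.
move=> hy ht; elim: i => [|i IH]; first by rewrite !expr0 subrr normr0 mul0r.
have -> : y ^+ i.+1 - t ^+ i.+1 = y * (y ^+ i - t ^+ i) + t ^+ i * (y - t).
  by rewrite !exprS; ring.
apply: le_trans (ler_normD _ _) _; rewrite !normrM -natr1 mulrDl mul1r.
apply: lerD; first by apply: le_trans (ler_wpM2r (normr_ge0 _) hy) _; rewrite mul1r.
by rewrite normrX; apply: ler_piMl => //; rewrite exprn_ile1.
Qed.

Definition poly_lip (p : {poly R}) : R := \sum_(i < size p) `|p`_i| * i%:R.

Lemma poly_lip_ge0 p : 0 <= poly_lip p.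
Proof. by apply: sumr_ge0 => i _; rewrite mulr_ge0. Qed.

Lemma poly_lipschitz (p : {poly R}) y t : `|y| <= 1 -> `|t| <= 1 ->
  `|p.[y] - p.[t]| <= poly_lip p * `|y - t|.
Proof.
move=> hy ht; rewrite !horner_coef -sumrB /poly_lip mulr_suml.
apply: le_trans (ler_norm_sum _ _ _) _; apply: ler_sum => i _.
by rewrite -mulrBr normrM -mulrA; apply: ler_wpM2l => //; apply: norm_subX_le.
Qed.

Lemma sum_wabs_le_of_sqr (I : finType) (w u : I -> R) (r : R) : 0 < r ->
  (forall i, 0 <= w i) -> \sum_i w i * u i ^+ 2 <= (\sum_i w i) * r ^+ 2 ->
  \sum_i w i * `|u i| <= (\sum_i w i) * r.
Proof.
move=> r_gt0 w_ge0 hvar.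
have amgm (v : R) : `|v| <= (v ^+ 2 / r + r) / 2.
  rewrite ler_pdivlMr // -[v ^+ 2](real_normK (num_real v)) -subr_ge0.
  have -> : `|v| ^+ 2 / r + r - `|v| * 2 = (`|v| - r) ^+ 2 / r.
    by field; apply: lt0r_neq0.
  by rewrite divr_ge0 ?sqr_ge0 ?ltW.
apply: (@le_trans _ _ (\sum_i w i * ((u i ^+ 2 / r + r) / 2))).
  by apply: ler_sum => i _; apply: ler_wpM2l.
have -> : \sum_i w i * ((u i ^+ 2 / r + r) / 2) =
    ((\sum_i w i * u i ^+ 2) / r + (\sum_i w i) * r) / 2.
  rewrite !mulr_suml -big_split mulr_suml; apply: eq_bigr => i _ /=.
  by field; apply: lt0r_neq0.
have : (\sum_i w i * u i ^+ 2) / r <= (\sum_i w i) * r.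
  by rewrite ler_pdivrMr // -mulrA -expr2.
lra.
Qed.

End PolyLipschitz.

Section Cube.
Variables (R : realType) (n : nat).
Implicit Types (b : cube n) (S : {set 'I_n}) (t : R).
Local Notation coord := (@Defs.coord R n).
Local Notation walsh := (@walsh R n).

Lemma sum_cube_prod (G : 'I_n -> bool -> R) :
  \sum_(b : cube n) \prod_(l < n) G l (b l) = \prod_(l < n) (G l true + G l false).
Proof. by rewrite -bigA_distr_bigA; apply: eq_bigr => l _; rewrite big_bool. Qed.

Definition cube_flip (l : 'I_n) b : cube n := [ffun i => (i == l) (+) b i].

Lemma cube_flipK l : involutive (cube_flip l).
Proof. by move=> b; apply/ffunP => i; rewrite !ffunE addKb. Qed.

Lemma coord_flip l b i :
  coord (cube_flip l b) i = if i == l then - coord b i else coord b i.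
Proof. by rewrite /Defs.coord ffunE; case: (i == l); case: (b i); rewrite ?opprK. Qed.

Lemma walsh_flip S l b :
  walsh S (cube_flip l b) = if l \in S then - walsh S b else walsh S b.
Proof.
rewrite /Defs.walsh; case: ifP => lS.
  rewrite (bigD1 l) //= [in RHS](bigD1 l) //= coord_flip eqxx mulNr.
  congr (- (_ * _)); apply: eq_bigr => i /andP [_ /negPf il].
  by rewrite coord_flip il.
apply: eq_bigr => i iS; rewrite coord_flip; case: eqP => // il.
by rewrite -il iS in lS.
Qed.

Lemma sum_flip_odd_eq0 l (G : cube n -> R) :
  (forall b, G (cube_flip l b) = - G b) -> \sum_b G b = 0.
Proof.
move=> Gflip.
have : \sum_b G b = - \sum_b G b.
  rewrite {1}(reindex_inj (can_inj (cube_flipK l))) /= -sumrN.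
  by apply: eq_bigr => b _; rewrite Gflip.
lra.
Qed.

Definition riesz t b : R := \prod_(l < n) (1 + t * coord b l).

Lemma riesz_walsh t b : riesz t b = \sum_(S : {set 'I_n}) t ^+ #|S| * walsh S b.
Proof.
rewrite /riesz (eq_bigr (fun l => t * coord b l + 1)) => [|l _]; last by rewrite addrC.
rewrite bigA_distr; apply: eq_bigr => S _.
by rewrite -big_mkcond /= /Defs.walsh big_split /= prodr_const.
Qed.

Lemma riesz_ge0 t b : `|t| <= 1 -> 0 <= riesz t b.
Proof.
rewrite ler_norml => /andP [ht1 ht2]; apply: prodr_ge0 => l _.
by rewrite /Defs.coord; case: (b l); lra.
Qed.

Lemma sum_riesz t : \sum_b riesz t b = 2 ^+ n.
Proof.
rewrite /riesz (sum_cube_prod (fun l c => 1 + t * (if c then -1 else 1))).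
by rewrite prodr_const card_ord; congr (_ ^+ _); lra.
Qed.

Lemma sum_riesz_cov t (l l' : 'I_n) :
  \sum_b riesz t b * ((coord b l - t) * (coord b l' - t)) =
  if l == l' then 2 ^+ n * (1 - t ^+ 2) else 0.
Proof.
pose sgn (c : bool) : R := if c then -1 else 1.
pose G i c := (1 + t * sgn c) *
  ((if i == l then sgn c - t else 1) * (if i == l' then sgn c - t else 1)).
have -> : \sum_b riesz t b * ((coord b l - t) * (coord b l' - t)) =
    \sum_(b : cube n) \prod_(i < n) G i (b i).
  apply: eq_bigr => b _; rewrite /G !big_split /=.
  by rewrite -!big_mkcond /= !big_pred1_eq.
rewrite sum_cube_prod (bigD1 l) //= /G /sgn eqxx.
case: (eqVneq l l') => [<-|nll'].
  rewrite (eq_bigr (fun _ => 2)) => [|i /negbTE il]; last by rewrite il; ring.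
  rewrite prodr_const cardC1 card_ord.
  have -> : n = (n.-1).+1 by have := ltn_ord l; lia.
  by rewrite exprS /=; ring.
have -> : (1 + t * -1) * ((-1 - t) * 1) + (1 + t * 1) * ((1 - t) * 1) = 0.
  by ring.
by rewrite mul0r.
Qed.

Definition cube_mean b : R := (\sum_(l < n) coord b l) / n%:R.

Lemma cube_mean_le1 b : `|cube_mean b| <= 1.
Proof.
rewrite /cube_mean; have [n0|n_gt0] := posnP n.
  have -> : n%:R = 0 :> R by rewrite n0.
  by rewrite invr0 mulr0 normr0.
have n_pos : (0 : R) < n%:R by rewrite ltr0n.
rewrite normrM normfV (gtr0_norm n_pos) ler_pdivrMr // mul1r.
apply: le_trans (ler_norm_sum _ _ _) _.
rewrite (eq_bigr (fun _ => 1)) ?sumr_const ?card_ord // => l _.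
by rewrite /Defs.coord; case: (b l); rewrite ?normrN normr1.
Qed.

Lemma sum_riesz_mean_sqr t : (0 < n)%N ->
  \sum_b riesz t b * (cube_mean b - t) ^+ 2 = 2 ^+ n * (1 - t ^+ 2) / n%:R.
Proof.
move=> n_gt0; have n_neq0 : n%:R != 0 :> R by rewrite pnatr_eq0 -lt0n.
have expand b : riesz t b * (cube_mean b - t) ^+ 2 = n%:R^-1 ^+ 2 *
    \sum_(l < n) \sum_(l' < n) riesz t b * ((coord b l - t) * (coord b l' - t)).
  have -> : cube_mean b - t = n%:R^-1 * \sum_(l < n) (coord b l - t).
    by rewrite sumrB sumr_const card_ord /cube_mean -mulr_natr; field.
  rewrite exprMn mulrCA; congr (_ * _).
  rewrite expr2 mulr_suml mulr_sumr.
  by apply: eq_bigr => l _; rewrite !mulr_sumr; apply: eq_bigr => l' _; ring.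
have diag (l : 'I_n) : \sum_(l' < n)
    (if l == l' then 2 ^+ n * (1 - t ^+ 2) else 0) = 2 ^+ n * (1 - t ^+ 2) :> R.
  by rewrite (bigD1 l) //= eqxx big1 ?addr0 // => l' /negbTE; rewrite eq_sym => ->.
rewrite (eq_bigr _ (fun b _ => expand b)) -mulr_sumr exchange_big /=.
under eq_bigr do rewrite exchange_big /=.
under eq_bigr do under eq_bigr do rewrite sum_riesz_cov.
under eq_bigr do rewrite diag.
by rewrite sumr_const card_ord -mulr_natr; field.
Qed.

Lemma sum_riesz_mean_sqr_le t : `|t| <= 1 ->
  \sum_b riesz t b * (cube_mean b - t) ^+ 2 <= 2 ^+ n * (2 / n.+1%:R).
Proof.
move=> ht; have := ht; rewrite ler_norml => /andP [ht1 ht2].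
have [n0|n_gt0] := posnP n.
  have n0R : n%:R = 0 :> R by rewrite n0.
  have -> : n.+1%:R = 1 :> R by rewrite n0.
  rewrite divr1 -[X in _ <= X * _](sum_riesz t) mulr_suml.
  apply: ler_sum => b _; apply: ler_wpM2l; first exact: riesz_ge0.
  by rewrite /cube_mean n0R invr0 mulr0 sub0r sqrrN; nra.
rewrite sum_riesz_mean_sqr // -mulrA ler_wpM2l ?exprn_ge0 //.
have n_pos : (0 : R) < n%:R by rewrite ltr0n.
rewrite ler_pdivrMr // mulrAC ler_pdivlMr ?ltr0n // -natr1.
have : (1 : R) <= n%:R by rewrite ler1n.
nra.
Qed.

Definition mean_dev : R := Num.sqrt (2 / n.+1%:R).

Lemma mean_dev_gt0 : 0 < mean_dev.
Proof. by rewrite sqrtr_gt0 divr_gt0 ?ltr0n. Qed.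

Lemma sum_riesz_mean_abs t : `|t| <= 1 ->
  \sum_b riesz t b * `|cube_mean b - t| <= 2 ^+ n * mean_dev.
Proof.
move=> ht; rewrite -(sum_riesz t).
apply: sum_wabs_le_of_sqr; [exact: mean_dev_gt0 | by move=> b; exact: riesz_ge0 |].
by rewrite sum_riesz sqr_sqrtr ?divr_ge0 //; exact: sum_riesz_mean_sqr_le.
Qed.

Lemma sum_riesz_poly_mean (p : {poly R}) t : `|t| <= 1 ->
  `|\sum_b riesz t b * p.[cube_mean b] - 2 ^+ n * p.[t]|
    <= poly_lip p * (2 ^+ n * mean_dev).
Proof.
move=> ht; rewrite -(sum_riesz t) mulr_suml -sumrB.
apply: le_trans (ler_norm_sum _ _ _) _; rewrite sum_riesz.
apply: le_trans _ (ler_wpM2l (poly_lip_ge0 p) (sum_riesz_mean_abs ht)).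
rewrite mulr_sumr; apply: ler_sum => b _.
rewrite -mulrBr normrM ger0_norm ?riesz_ge0 // mulrCA.
by apply: ler_wpM2l; [exact: riesz_ge0 | apply: poly_lipschitz; rewrite ?cube_mean_le1].
Qed.

End Cube.

Arguments cube_mean {R n} b.
Arguments mean_dev {R} n.

Section Chebyshev.
Variable R : realType.
Local Notation cheb := (@cheb R).

Lemma cheb0 : cheb 0 = 1. Proof. by []. Qed.
Lemma cheb1 : cheb 1 = 'X. Proof. by []. Qed.

Lemma chebSS k : cheb k.+2 = 2%:P * 'X * cheb k.+1 - cheb k.
Proof. by rewrite /Defs.cheb /=; case: (cheb_pair k). Qed.

Lemma cheb_cos k x : (cheb k).[cos x] = cos (k%:R * x).
Proof.
elim/ltn_ind: k => -[|[|k]] IH; first by rewrite cheb0 hornerC mul0r cos0.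
  by rewrite cheb1 hornerX mul1r.
rewrite chebSS !hornerE !IH //.
have -> : k.+2%:R * x = k.+1%:R * x + x by rewrite -(natr1 k.+1) mulrDl mul1r.
have -> : k%:R * x = k.+1%:R * x - x by rewrite -(natr1 k) mulrDl mul1r addrK.
rewrite cosB cosD; lra.
Qed.

Lemma cheb_le1 k t : `|t| <= 1 -> `|(cheb k).[t]| <= 1.
Proof.
move=> ht; have ht' : t \in `[(-1), 1] by rewrite in_itv /= -ler_norml.
by rewrite -(acosK ht') cheb_cos cos_max.
Qed.

Lemma chebN k t : (cheb k).[- t] = (-1) ^+ k * (cheb k).[t].
Proof.
elim/ltn_ind: k => -[|[|k]] IH; first by rewrite cheb0 !hornerE ?expr0 ?mul1r.
  by rewrite cheb1 !hornerE ?expr1 ?mulN1r.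
by rewrite chebSS !hornerE !IH // !exprS; ring.
Qed.

Lemma size_cheb k : (size (cheb k) <= k.+1)%N.
Proof.
elim/ltn_ind: k => -[|[|k]] IH; first by rewrite cheb0 size_polyC; case: (_ != _).
  by rewrite cheb1 size_polyX.
have size_k := IH k (leqnSn _); have size_k1 := IH k.+1 (ltnSn _).
have size_2X : (size (2%:P * 'X : {poly R})%R <= 2)%N.
  by rewrite mul_polyC (leq_trans (size_scale_leq _ _)) // size_polyX.
rewrite chebSS; apply: leq_trans (size_polyD _ _) _; rewrite geq_max size_polyN.
apply/andP; split; last exact: leq_trans size_k (leqW (leqnSn _)).
apply: leq_trans (size_polyMleq _ _) _; rewrite -subn1 leq_subLR.
by apply: leq_trans (leq_add size_2X size_k1) _; lia.
Qed.

End Chebyshev.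

Section ChebyshevExtrema.
Variables (R : realType) (K : nat).

Definition cheb_extr (j : nat) : R := cos (j%:R * pi / K%:R).

Lemma cheb_extrE j : (j <= K./2)%N -> (cheb K).[cheb_extr j] = (-1) ^+ j.
Proof.
move=> hj; rewrite cheb_cos; have [K0|K_gt0] := posnP K.
  have -> : j = 0%N by move: hj; rewrite K0; lia.
  by rewrite !mul0r mulr0 cos0.
rewrite mulrCA divff ?pnatr_eq0 -?lt0n // mulr1.
have -> : j%:R * pi = 0 + pi *+ j :> R by rewrite add0r mulr_natl.
by rewrite (alternatingn (@cosDpi R)) cos0 mulr1.
Qed.

Lemma cheb_extr_angle j : (j <= K./2)%N -> 0 <= j%:R * (pi : R) / K%:R <= pi / 2.
Proof.
move=> hj; have [K0|K_gt0] := posnP K.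
  by rewrite K0 invr0 mulr0 lexx divr_ge0 // pi_ge0.
have K_pos : (0 : R) < K%:R by rewrite ltr0n.
rewrite divr_ge0 ?mulr_ge0 ?pi_ge0 //= ler_pdivrMr //.
have : 2 * j%:R <= K%:R :> R by rewrite -natrM ler_nat; lia.
have := @pi_ge0 R; nra.
Qed.

Lemma cheb_extr_ge0 j : (j <= K./2)%N -> 0 <= cheb_extr j.
Proof.
move=> /cheb_extr_angle /andP [h0 h1]; apply: cos_ge0_pihalf; rewrite h1 andbT.
by apply: le_trans h0; rewrite oppr_le0 divr_ge0 // pi_ge0.
Qed.

Lemma cheb_extr_gt0 j : odd K -> (j <= K./2)%N -> 0 < cheb_extr j.
Proof.
move=> oK hj; have /andP [h0 _] := cheb_extr_angle hj.
apply: cos_gt0_pihalf; apply/andP; split.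
  by apply: lt_le_trans h0; rewrite oppr_lt0 divr_gt0 // pi_gt0.
have K_pos : (0 : R) < K%:R by rewrite ltr0n; case: (K) oK.
rewrite ltr_pdivrMr //.
have : 2 * j%:R < K%:R :> R by rewrite -natrM ltr_nat; move: oK hj; lia.
have := @pi_gt0 R; nra.
Qed.

Lemma cheb_extr_le1 j : `|cheb_extr j| <= 1.
Proof. exact: cos_max. Qed.

Lemma cheb_extr_ltn i j : (i < j <= K./2)%N -> cheb_extr j < cheb_extr i.
Proof.
move=> /andP [ij hj]; have K_pos : (0 : R) < K%:R by rewrite ltr0n; lia.
have angle_in l : (l <= K./2)%N -> l%:R * (pi : R) / K%:R \in `[0, pi].
  move=> /cheb_extr_angle /andP [h0 h1]; rewrite in_itv /= h0 /=.
  by apply: le_trans h1 _; rewrite ler_pdivrMr // ler_peMr ?pi_ge0 // ler1n.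
rewrite /cheb_extr ltr_cos ?angle_in //; last lia.
by rewrite ltr_pM2r ?invr_gt0 // ltr_pM2r ?pi_gt0 // ltr_nat.
Qed.

End ChebyshevExtrema.

Section SignPatterns.
Variable R : realFieldType.

Lemma coef_prod_XsubC_sign (I : eqType) (s : seq I) (F : I -> R) :
  (forall i, i \in s -> 0 <= F i) ->
  forall r, 0 <= (-1) ^+ (size s + r) * (\prod_(i <- s) ('X - (F i)%:P))`_r.
Proof.
elim: s => [|a s IH] F_ge0 r.
  by rewrite big_nil coef1; case: r => [|r]; rewrite ?mul1r ?mulr0.
have Fa_ge0 : 0 <= F a by apply: F_ge0; rewrite inE eqxx.
have /IH IHs : forall i, i \in s -> 0 <= F i.
  by move=> i si; apply: F_ge0; rewrite inE si orbT.
rewrite big_cons mulrBl coefB coefXM coefCM /=.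
case: r => [|r] /=.
  have := IHs 0%N; set c0 := _`_0; rewrite !addn0 exprS => h0.
  by have := mulr_ge0 Fa_ge0 h0; nra.
have := IHs r.+1; have := IHs r; set c0 := _`_r; set c1 := _`_r.+1.
rewrite addSn addnS !exprS => h0 h1.
by have := mulr_ge0 Fa_ge0 h1; nra.
Qed.

Lemma sign_prod_pivot m (j : 'I_m) (f : 'I_m -> R) :
  (forall i : 'I_m, (i < j)%N -> f i < 0) -> (forall i : 'I_m, (j < i)%N -> 0 < f i) ->
  0 < (-1) ^+ j * \prod_(i < m | i != j) f i.
Proof.
move=> f_lt0 f_gt0.
have f_sign i : i != j -> f i = (if (i < j)%N then -1 else 1) * `|f i|.
  move=> ij; case: ltnP => h; first by rewrite ltr0_norm ?f_lt0 // mulN1r opprK.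
  rewrite mul1r gtr0_norm //; apply: f_gt0; rewrite ltn_neqAle h andbT eq_sym.
  by rewrite -(inj_eq val_inj) in ij.
have signs : \prod_(i < m | i != j) (if (i < j)%N then -1 else 1) = (-1) ^+ j :> R.
  rewrite -[in RHS](subn0 j) -prodr_const_nat big_mkord.
  rewrite (big_ord_widen_cond m xpredT (fun=> -1) (ltnW (ltn_ord j))).
  rewrite big_mkcond [in RHS]big_mkcond.
  by apply: eq_bigr => i _; rewrite -val_eqE /=; case: ltngtP.
rewrite (eq_bigr _ f_sign) big_split /= signs mulrA -exprD addnn -signr_odd odd_double.
rewrite expr0 mul1r.
apply: prodr_gt0 => i ij; rewrite normr_gt0; apply/eqP => fi0.
case: (ltngtP i j) => [/f_lt0|/f_gt0|/val_inj ji]; rewrite ?fi0 ?ltxx //.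
by rewrite ji eqxx in ij.
Qed.

End SignPatterns.

Section LagrangeCoefficients.
Variables (R : realFieldType) (m : nat) (x : nat -> R).
Hypothesis x_decr : forall i j, (i < j)%N -> x j < x i.

Let x_inj : injective x.
Proof.
by move=> i j xij; case: (ltngtP i j) => // /x_decr; rewrite xij ltxx.
Qed.

Definition lagrange_coef (r : nat) (j : 'I_m.+1) : R := (tnth (lagrange m.+1 x) j)`_r.

Lemma lagrange_coef_moment r s : (s <= m)%N ->
  \sum_(j < m.+1) lagrange_coef r j * x j ^+ s = (r == s)%:R.
Proof.
move=> s_le_m; have size_Xs : (size ('X^s : {poly R}) <= m.+1)%N by rewrite size_polyXn.
rewrite -coefXn {1}(lagrange_gen (ltn0Sn m) x_inj size_Xs) coef_sum.
by apply: eq_bigr => j _; rewrite coefCM hornerXn mulrC.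
Qed.

Hypothesis x_ge0 : forall j, (j <= m)%N -> 0 <= x j.

Lemma lagrange_coef_sign r (j : 'I_m.+1) :
  0 <= (-1) ^+ (m + r) * (-1) ^+ j * lagrange_coef r j.
Proof.
rewrite /lagrange_coef lagrangeE ?ltn0Sn // coefCM.
set q := \prod_(i < m.+1 | i != j) _.
have q_xj : 0 < (-1) ^+ j * q.[x j].
  rewrite /q horner_prod; under eq_bigr do rewrite hornerXsubC.
  by apply: sign_prod_pivot => i ij; rewrite ?subr_lt0 ?subr_gt0; exact: x_decr.
have q_r : 0 <= (-1) ^+ (m + r) * q`_r.
  have <- : size [seq i <- index_enum 'I_m.+1 | i != j] = m.
    have card_j : #|predC1 j| = m by rewrite cardC1 card_ord.
    by apply: etrans card_j; rewrite cardE /enum_mem size_filter.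
  rewrite /q -big_filter; apply: coef_prod_XsubC_sign => i _.
  by apply: x_ge0; rewrite -ltnS.
have -> : (-1) ^+ (m + r) * (-1) ^+ j * ((q.[x j])^-1 * q`_r) =
    ((-1) ^+ (m + r) * q`_r) / ((-1) ^+ j * q.[x j]).
  by rewrite invfM invr_sign; ring.
by apply: divr_ge0 => //; exact: ltW.
Qed.

End LagrangeCoefficients.

Section ChebyshevCertificate.
Variables (R : realType) (K d : nat).
Hypothesis d_le_K : (d <= K)%N.
Hypothesis K_d_even : ~~ odd (K - d).
Local Notation m := K./2.
Local Notation eta := (@cheb_extr R K).
Local Notation oddK := (odd K : nat).

(* Only the values at [j <= m] are used; the tail keeps the sequence strictly
   decreasing, hence injective as [lagrange] requires. *)
Definition extr_sqr (j : nat) : R := if (j <= m)%N then eta j ^+ 2 else - (1 + j%:R).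

Lemma extr_sqr_ge0 j : (j <= m)%N -> 0 <= extr_sqr j.
Proof. by move=> hj; rewrite /extr_sqr hj sqr_ge0. Qed.

Lemma extr_sqr_decr i j : (i < j)%N -> extr_sqr j < extr_sqr i.
Proof.
move=> ij; rewrite /extr_sqr; case: (leqP j m) => hj.
  rewrite ifT; last by lia.
  have := cheb_extr_ge0 R hj; have : eta j < eta i by apply: cheb_extr_ltn; rewrite ij.
  nra.
case: (leqP i m) => hi; last by rewrite ltrN2 ltrD2l ltr_nat.
by apply: lt_le_trans (sqr_ge0 _); rewrite oppr_lt0 ltr_pwDl.
Qed.

Local Notation beta := (@lagrange_coef R m extr_sqr d./2).

(* [beta j] is the coefficient of [X^(d/2)] in the [j]-th Lagrange polynomial
   at the nodes [extr_sqr], so [\sum_j beta j * extr_sqr j ^+ h = (h == d/2)]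
   for [h <= m].  The atoms [+/- eta j] share [beta j] evenly when [K] is even
   and carry [+/- beta j / (2 eta j)] when [K] is odd: either way the moment of
   order [b + 2 h] vanishes if [b != K mod 2] and is
   [\sum_j beta j * extr_sqr j ^+ h] otherwise. *)
Definition cert_node (js : 'I_m.+1 * bool) : R := (if js.2 then -1 else 1) * eta js.1.
Definition cert_mass (js : 'I_m.+1 * bool) : R :=
  (if js.2 then (-1) ^+ oddK else 1) * beta js.1 / (2 * eta js.1 ^+ oddK).

Lemma extr_pow_odd_gt0 (j : 'I_m.+1) : 0 < eta j ^+ oddK.
Proof.
case oK : (odd K); rewrite ?expr0 ?expr1 //.
by apply: cheb_extr_gt0; rewrite ?oK // -ltnS.
Qed.

Lemma cert_pair_moment (j : 'I_m.+1) (b : bool) (h : nat) :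
  \sum_(s : bool) cert_mass (j, s) * cert_node (j, s) ^+ (b + h.*2) =
  if odd K (+) b then 0 else beta j * extr_sqr j ^+ h.
Proof.
rewrite big_bool /cert_mass /cert_node /extr_sqr /= -ltnS ltn_ord.
have := extr_pow_odd_gt0 j; set y := eta j; set z := beta j.
rewrite !mulN1r !mul1r -!mul2n !(exprD _ b) !exprM sqrrN.
by case: (odd K); case: b; rewrite /= ?expr0 ?expr1 => y_pos; field; rewrite ?lt0r_neq0.
Qed.

Lemma cert_moment e : (e <= K.+1)%N ->
  \sum_js cert_mass js * cert_node js ^+ e = (e == d)%:R.
Proof.
move=> e_le.
rewrite -(pair_bigA _ (fun j s => cert_mass (j, s) * cert_node (j, s) ^+ e)) /=.
rewrite -[e]odd_double_half; under eq_bigr do rewrite cert_pair_moment.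
have odd_d : odd d = odd K by move: K_d_even d_le_K; lia.
case odd_e : (odd K (+) odd e).
  rewrite big1 // odd_double_half; case: eqP => // ed.
  by rewrite -odd_d -ed addbb in odd_e.
rewrite (@lagrange_coef_moment R m extr_sqr extr_sqr_decr); last first.
  by move: odd_e e_le; lia.
congr (_%:R); apply/eqP/eqP; rewrite odd_double_half.
by move: odd_e; rewrite -odd_d; lia.
Qed.

Lemma cert_node_le1 js : `|cert_node js| <= 1.
Proof.
by rewrite /cert_node normrM; case: js.2; rewrite ?normrN normr1 mul1r cheb_extr_le1.
Qed.

Lemma cheb_cert_node js : (cheb K).[cert_node js] = (-1) ^+ (oddK * js.2 + js.1).
Proof.
case: js => j [] /=; rewrite /cert_node /= ?mulN1r ?mul1r ?chebN.
  by rewrite cheb_extrE ?(ltnSE (ltn_ord j)) // muln1 exprD signr_odd.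
by rewrite cheb_extrE ?(ltnSE (ltn_ord j)) // muln0.
Qed.

Lemma cert_mass_sign js :
  0 <= (-1) ^+ (m + d./2) * cert_mass js * (cheb K).[cert_node js].
Proof.
have beta_sign := lagrange_coef_sign extr_sqr_decr extr_sqr_ge0 d./2.
case: js => j s; rewrite cheb_cert_node /cert_mass /=.
have := beta_sign j; have := extr_pow_odd_gt0 j.
set sg := (-1) ^+ (m + d./2); set y := eta j ^+ oddK; set z := beta j => y_pos z_sign.
have -> : sg * ((if s then (-1) ^+ oddK else 1) * z / (2 * y)) *
    (-1) ^+ (oddK * s + j) = ((-1) ^+ (oddK * s)) ^+ 2 * (sg * (-1) ^+ j * z) / (2 * y).
  by rewrite exprD; case: s => /=; rewrite ?muln1 ?muln0; field; rewrite lt0r_neq0.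
by rewrite sqrr_sign mul1r divr_ge0 // mulr_ge0 // ltW.
Qed.

Lemma sum_cert_mass_cheb : \sum_js cert_mass js * (cheb K).[cert_node js] = ccoef K d.
Proof.
have moment_coef (i : 'I_K.+1) :
    \sum_js cert_mass js * ((cheb K)`_i * cert_node js ^+ i) =
    (cheb K)`_i * (i == d :> nat)%:R.
  under eq_bigr do rewrite mulrCA.
  by rewrite -mulr_sumr cert_moment // ltnW.
under eq_bigr do rewrite (horner_coef_wide _ (size_cheb R K)) mulr_sumr.
rewrite exchange_big /=; under eq_bigr do rewrite moment_coef.
rewrite (bigD1 (Ordinal (d_le_K : (d < K.+1)%N))) //= eqxx mulr1 big1 ?addr0 // => i.
by rewrite -val_eqE /= => /negbTE ->; rewrite mulr0.
Qed.

End ChebyshevCertificate.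

Lemma ctilde_certificate (R : realType) (k d : nat) : (d <= k)%N ->
  exists (I : finType) (node mass : I -> R) (T : {poly R}),
  [/\ forall i, `|node i| <= 1,
      forall e, (e <= k)%N -> \sum_i mass i * node i ^+ e = (e == d)%:R,
      (size T <= k.+1)%N,
      forall t, `|t| <= 1 -> `|T.[t]| <= 1 &
      \sum_i `|mass i| = `|ctilde k d| /\ \sum_i mass i * T.[node i] = `|ctilde k d|].
Proof.
move=> d_le_k; pose K := if odd (k - d) then k.-1 else k.
have d_le_K : (d <= K)%N by rewrite /K; case: ifP; lia.
have K_d_even : ~~ odd (K - d) by rewrite /K; case: ifP; lia.
have ctildeE : ctilde k d = ccoef K d :> R by rewrite /ctilde /K; case: ifP.
pose node := @cert_node R K; pose mass := @cert_mass R K d.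
pose sg : R := (-1) ^+ (K./2 + d./2).
have mass_abs js : `|mass js| = sg * mass js * (cheb K).[node js].
  rewrite -[RHS]ger0_norm; last exact: cert_mass_sign.
  by rewrite !normrM cheb_cert_node !normr_sign mul1r mulr1.
have total_mass : \sum_js `|mass js| = `|ctilde k d|.
  have sum_abs : \sum_js `|mass js| = sg * ccoef K d.
    under eq_bigr do rewrite mass_abs -mulrA.
    by rewrite -mulr_sumr /mass /node sum_cert_mass_cheb.
  by rewrite -[LHS]ger0_norm ?sumr_ge0 // sum_abs normrM normr_sign mul1r ctildeE.
exists ('I_(K./2).+1 * bool)%type, node, mass, (sg *: cheb K).
split.
- exact: cert_node_le1.
- by move=> e e_le; apply: cert_moment => //; rewrite /K; case: ifP; lia.
- rewrite (leq_trans (size_scale_leq _ _)) // (leq_trans (size_cheb R K)) //.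
  by rewrite /K; case: ifP; lia.
- by move=> t t_le1; rewrite hornerZ normrM normr_sign mul1r cheb_le1.
split=> //; rewrite -total_mass; apply: eq_bigr => js _.
by rewrite mass_abs hornerZ mulrCA mulrA.
Qed.

Section HighDegreeOrthogonality.
Variables (R : realType) (n k : nat).
Local Notation coord := (@Defs.coord R n).

Lemma sum_walsh_coord_sumX (S : {set 'I_n}) e : (e < #|S|)%N ->
  \sum_(b : cube n) walsh S b * (\sum_(l < n) coord b l) ^+ e = 0.
Proof.
move=> e_lt_S.
have expand b : (\sum_(l < n) coord b l) ^+ e =
    \sum_(f : {ffun 'I_e -> 'I_n}) \prod_(t < e) coord b (f t).
  transitivity (\prod_(t < e) \sum_(l < n) coord b l); last exact: bigA_distr_bigA.
  by rewrite prodr_const card_ord.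
under eq_bigr do rewrite expand mulr_sumr.
rewrite exchange_big big1 // => f _.
have /subsetPn [l lS l_notin_f] : ~~ (S \subset codom f).
  apply: contraL e_lt_S => /subset_leq_card S_le; rewrite -leqNgt.
  by apply: leq_trans S_le _; rewrite (leq_trans (card_size _)) // size_codom card_ord.
apply: (sum_flip_odd_eq0 (l := l)) => b; rewrite walsh_flip lS mulNr.
congr (- (_ * _)); apply: eq_bigr => t _; rewrite coord_flip.
by case: eqP => // ftl; rewrite -ftl codom_f in l_notin_f.
Qed.

Lemma Pgt0 : Pgt k (fun _ : cube n => 0 : R).
Proof.
by exists (fun=> 0); split=> // b; rewrite big1 // => S _; rewrite mul0r.
Qed.

Lemma PgtB (g h : cube n -> R) : Pgt k g -> Pgt k h -> Pgt k (fun b => g b - h b).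
Proof.
move=> [a [a0 ga]] [a' [a'0 ha']]; exists (fun S => a S - a' S); split.
  by move=> S S_le; rewrite a0 ?a'0 ?subrr.
by move=> b; rewrite ga ha' -sumrB; apply: eq_bigr => S _; rewrite mulrBl.
Qed.

Lemma Pgt_orth_poly_mean (g : cube n -> R) (p : {poly R}) :
  Pgt k g -> (size p <= k.+1)%N -> \sum_b g b * p.[cube_mean b] = 0.
Proof.
move=> [a [a0 ga]] size_p; under eq_bigr do rewrite ga mulr_suml.
rewrite exchange_big big1 // => S _.
have [S_le|S_gt] := leqP #|S| k.
  by rewrite big1 // => b _; rewrite a0 // !mul0r.
under eq_bigr do rewrite (horner_coef_wide _ size_p) mulr_sumr.
rewrite exchange_big big1 // => e _.
transitivity (a S * p`_e * n%:R^-1 ^+ e *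
    \sum_b walsh S b * (\sum_(l < n) coord b l) ^+ e).
  by rewrite mulr_sumr; apply: eq_bigr => b _; rewrite /cube_mean exprMn; ring.
by rewrite sum_walsh_coord_sumX ?mulr0 // (leq_trans (ltn_ord e)).
Qed.

End HighDegreeOrthogonality.

Section Distance.
Variables (R : realType) (n k d : nat).
Local Notation f_d := (@Defs.fsym R n d).

Lemma L1norm_ge0 (h : cube n -> R) : 0 <= L1norm h.
Proof. by rewrite mulr_ge0 ?invr_ge0 ?exprn_ge0 ?sumr_ge0. Qed.

Lemma distP_le (g : cube n -> R) :
  Pgt k g -> distP n k d <= L1norm (fun b => f_d b - g b).
Proof.
move=> g_Pgt; apply: ge_inf; last by exists g.
by exists 0 => _ [h _ <-]; exact: L1norm_ge0.
Qed.

Lemma distP_ge (c : R) :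
  (forall g, Pgt k g -> c <= L1norm (fun b => f_d b - g b)) -> c <= distP n k d.
Proof.
move=> c_le; apply: lb_le_inf.
  by exists (L1norm (fun b => f_d b - 0)), (fun=> 0); first exact: Pgt0.
by move=> _ [g g_Pgt <-]; exact: c_le.
Qed.

End Distance.

Section Duality.
Variables (R : realType) (n k d : nat) (I : finType) (node mass : I -> R).
Hypothesis node_le1 : forall i, `|node i| <= 1.
Hypothesis mass_moment :
  forall e, (e <= k)%N -> \sum_i mass i * node i ^+ e = (e == d)%:R.
Local Notation f_d := (@Defs.fsym R n d).

Definition riesz_mix (b : cube n) : R := \sum_i mass i * riesz (node i) b.

Lemma fsym_sub_riesz_mix_Pgt : Pgt k (fun b => f_d b - riesz_mix b).
Proof.
exists (fun S : {set 'I_n} => (#|S| == d)%:R - \sum_i mass i * node i ^+ #|S|); split.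
  by move=> S S_le; rewrite mass_moment ?subrr.
move=> b.
have -> : f_d b = \sum_(S : {set 'I_n}) (#|S| == d)%:R * walsh S b.
  rewrite /Defs.fsym big_mkcond; apply: eq_bigr => S _.
  by case: eqP; rewrite ?mul1r ?mul0r.
have -> : riesz_mix b =
    \sum_(S : {set 'I_n}) (\sum_i mass i * node i ^+ #|S|) * walsh S b.
  rewrite /riesz_mix; under eq_bigr do rewrite riesz_walsh mulr_sumr.
  rewrite exchange_big; apply: eq_bigr => S _; rewrite mulr_suml.
  by apply: eq_bigr => i _; rewrite mulrA.
by rewrite -sumrB; apply: eq_bigr => S _; rewrite mulrBl.
Qed.

Lemma L1norm_riesz_mix : L1norm riesz_mix <= \sum_i `|mass i|.
Proof.
rewrite /L1norm ler_pdivrMl ?exprn_gt0 //.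
apply: (@le_trans _ _ (\sum_b \sum_i `|mass i| * riesz (node i) b)).
  apply: ler_sum => b _; rewrite /riesz_mix; apply: le_trans (ler_norm_sum _ _ _) _.
  by apply: ler_sum => i _; rewrite normrM (ger0_norm (riesz_ge0 _ (node_le1 i))).
rewrite exchange_big mulr_sumr; apply: ler_sum => i _.
by rewrite -mulr_sumr sum_riesz mulrC.
Qed.

Lemma distP_le_mass : distP n k d <= \sum_i `|mass i|.
Proof.
apply: le_trans (distP_le d fsym_sub_riesz_mix_Pgt) _.
by under eq_fun do rewrite opprB addrC subrK; exact: L1norm_riesz_mix.
Qed.

Variable T : {poly R}.
Hypothesis size_T : (size T <= k.+1)%N.
Hypothesis T_le1 : forall t, `|t| <= 1 -> `|T.[t]| <= 1.

Lemma sum_riesz_mix_poly_mean_ge :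
  2 ^+ n * (\sum_i mass i * T.[node i] - (\sum_i `|mass i|) * poly_lip T * mean_dev n)
    <= \sum_b riesz_mix b * T.[cube_mean b].
Proof.
have -> : \sum_b riesz_mix b * T.[cube_mean b] =
    \sum_i mass i * \sum_(b : cube n) riesz (node i) b * T.[cube_mean b].
  under eq_bigr do rewrite mulr_suml; rewrite exchange_big.
  by apply: eq_bigr => i _; rewrite mulr_sumr; apply: eq_bigr => b _; rewrite mulrA.
have near i :
    2 ^+ n * (mass i * T.[node i]) - `|mass i| * poly_lip T * (2 ^+ n * mean_dev n)
    <= mass i * \sum_(b : cube n) riesz (node i) b * T.[cube_mean b].
  have := sum_riesz_poly_mean n T (node_le1 i); set E := \sum_b _ => E_near.
  have := ler_wpM2l (normr_ge0 (mass i)) E_near.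
  have := ler_norm (mass i * (2 ^+ n * T.[node i] - E)).
  by rewrite normrM distrC; lra.
apply: le_trans (ler_sum _ (fun i _ => near i)).
by rewrite sumrB -mulr_sumr -!mulr_suml; lra.
Qed.

Lemma L1norm_fsym_sub_ge (g : cube n -> R) : Pgt k g ->
  \sum_i mass i * T.[node i] - (\sum_i `|mass i|) * poly_lip T * mean_dev n
    <= L1norm (fun b => f_d b - g b).
Proof.
move=> g_Pgt; rewrite /L1norm ler_pdivlMl ?exprn_gt0 //.
apply: le_trans (_ : _ <= \sum_b (f_d b - g b) * T.[cube_mean b]) _; last first.
  apply: ler_sum => b _; apply: le_trans (ler_norm _) _.
  by rewrite normrM ler_piMr ?T_le1 ?cube_mean_le1.
have -> : \sum_b (f_d b - g b) * T.[cube_mean b] =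
    \sum_b riesz_mix b * T.[cube_mean b] +
    \sum_b (f_d b - riesz_mix b - g b) * T.[cube_mean b].
  by rewrite -big_split; apply: eq_bigr => b _ /=; ring.
rewrite (Pgt_orth_poly_mean (PgtB fsym_sub_riesz_mix_Pgt g_Pgt) size_T) addr0.
exact: sum_riesz_mix_poly_mean_ge.
Qed.

End Duality.

Lemma cvg_mean_dev (R : realType) : @mean_dev R @ \oo --> 0.
Proof.
rewrite -sqrtr0 -(mulr0 2); apply: continuous_cvg; first exact: sqrt_continuous.
by apply: cvgMl_tmp; exact: cvg_harmonic.
Qed.

Theorem corollary1p5 (R : realType) (k d : nat) :
  (d <= k)%N ->
  exists eps : nat -> R,
    (forall n : nat, (k <= n)%N ->
       0 < eps n /\
       `|@ctilde R k d| - eps n <= @distP R n k d /\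
       @distP R n k d <= `|@ctilde R k d|) /\
    eps @ \oo --> (0 : R).
Proof.
move=> d_le_k.
have [I [node [mass [T [node_le1 mass_moment size_T T_le1 [mass_abs mass_T]]]]]] :=
  ctilde_certificate R d_le_k.
pose C := `|ctilde k d| * poly_lip T.
have C_ge0 : 0 <= C by rewrite mulr_ge0 ?poly_lip_ge0.
exists (fun n => (C + 1) * mean_dev n); split.
  move=> n _; have dev_pos := @mean_dev_gt0 R n.
  split; first by rewrite mulr_gt0 // ltr_wpDl.
  split; last by rewrite -mass_abs (distP_le_mass n node_le1 mass_moment).
  apply: distP_ge => g g_Pgt.
  apply: le_trans (L1norm_fsym_sub_ge node_le1 mass_moment size_T T_le1 g_Pgt).
  by rewrite mass_T mass_abs -/C; nra.
by rewrite -(mulr0 (C + 1)); apply: cvgMl_tmp; exact: cvg_mean_dev.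
Qed.
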